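(* Let $f:\mathbb{S}^2\times\mathbb{R}\to\mathbb{S}^2\times\mathbb{R}$ be a geodesic-preserving bijection. Then $f$ maps horizontal geodesics to horizontal geodesics, vertical geodesics to vertical geodesics, and slant geodesics to slant geodesics.
   Context: $\mathbb{S}^2\times\mathbb{R}$ has the Riemannian product metric of the round unit sphere and the real line. A geodesic is the image of a locally isometric immersion of the whole real line; a bijection (not assumed continuous) is geodesic-preserving if it maps every geodesic onto a geodesic as a set. A geodesic is vertical if it equals $\{p\}\times\mathbb{R}$, horizontal if it is contained in some $\mathbb{S}^2\times\{r\}$ (a great circle), and slant otherwise. *)

From Stdlib Require Import Reals.
Open Scope R_scope.

Record S2 : Type := mkS2 {
  s2x : R; s2y : R; s2z : R;
  s2_unit : s2x * s2x + s2y * s2y + s2z * s2z = 1 }.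

Definition M : Type := (S2 * R)%type.

Definition s2dot (p q : S2) : R :=
  s2x p * s2x q + s2y p * s2y q + s2z p * s2z q.

Definition dS2 (p q : S2) : R := acos (s2dot p q).

Definition distM (x y : M) : R :=
  sqrt (dS2 (fst x) (fst y) ^ 2 + (snd x - snd y) ^ 2).

Definition locally_isometric (c : R -> M) : Prop :=
  forall t : R, exists eps : R, 0 < eps /\
    forall s u : R, Rabs (s - t) < eps -> Rabs (u - t) < eps ->
      distM (c s) (c u) = Rabs (s - u).

Definition geodesic (G : M -> Prop) : Prop :=
  exists c : R -> M, locally_isometric c /\
    forall x : M, G x <-> exists t : R, c t = x.

Definition vertical (G : M -> Prop) : Prop :=
  exists p : S2, forall x : M, G x <-> fst x = p.

Definition horizontal (G : M -> Prop) : Prop :=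
  geodesic G /\ exists r : R, forall x : M, G x -> snd x = r.

Definition slant (G : M -> Prop) : Prop :=
  geodesic G /\ ~ vertical G /\ ~ horizontal G.

Definition image (f : M -> M) (G : M -> Prop) : M -> Prop :=
  fun y => exists x, G x /\ f x = y.

Definition bijection (f : M -> M) : Prop :=
  exists g : M -> M, (forall x, g (f x) = x) /\ (forall y, f (g y) = y).

Definition geodesic_preserving (f : M -> M) : Prop :=
  forall G, geodesic G -> geodesic (image f G).

(* Every geodesic of S^2 x R is a helix t |-> (cos (a t) P + sin (a t) W, b t + r) with
   a^2 + b^2 = 1: along a local isometry the triangle inequality of S^2 is an equality case of
   Minkowski's inequality, so the height is affine, and then the S^2 component moves at constant
   speed along a great circle. Hence a geodesic is either horizontal (b = 0) or meets every
   slice S^2 x {h} exactly once.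

   If f sent a horizontal great circle to a non-horizontal geodesic, then, propagating along
   great circles through antipodal points, all points of that slice would have images at
   pairwise different heights; yet the image of the circle reaches the image height of the pole
   of the circle. So f maps slices into slices and great circles onto great circles, and a
   non-horizontal geodesic, which meets every height, keeps a non-horizontal image.

   For a vertical line through p, suppose the images of (p, r) and (p, r') have S^2 components
   u, v with v <> u and v <> -u. The helices that wind once from (p, r) to (p, r') around the
   great circles through p sweep out a small circle of a single slice, and their images all
   contain f (p, r) and f (p, r'); so that small circle is mapped into the great circle
   orthogonal to u x v. This is impossible, because three points of a slice that are not on a
   common great circle keep images that are not on a common great circle. Hence the image of a
   vertical line is vertical, and slant geodesics stay slant because every vertical line is the
   image of a vertical line. *)

From Stdlib Require Import Reals Lra Psatz Classical ProofIrrelevance.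
From Coquelicot Require Import Coquelicot.
Open Scope R_scope.

(** * Vectors of R^3 *)

Record vec3 : Type := Vec3 { vx : R; vy : R; vz : R }.

Definition dot (a b : vec3) : R := vx a * vx b + vy a * vy b + vz a * vz b.

Definition cross (a b : vec3) : vec3 :=
  Vec3 (vy a * vz b - vz a * vy b) (vz a * vx b - vx a * vz b) (vx a * vy b - vy a * vx b).

Definition det (a b c : vec3) : R := dot (cross a b) c.

Definition lincomb (x : R) (a : vec3) (y : R) (b : vec3) : vec3 :=
  Vec3 (x * vx a + y * vx b) (x * vy a + y * vy b) (x * vz a + y * vz b).

Definition vopp (a : vec3) : vec3 := Vec3 (- vx a) (- vy a) (- vz a).

Definition vzero : vec3 := Vec3 0 0 0.

Definition orthonormal (P W : vec3) : Prop := dot P P = 1 /\ dot W W = 1 /\ dot P W = 0.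

Definition circ (P W : vec3) (t : R) : vec3 := lincomb (cos t) P (sin t) W.

Lemma vec3_ext (a b : vec3) : vx a = vx b -> vy a = vy b -> vz a = vz b -> a = b.
Proof. destruct a, b; simpl; intros; subst; reflexivity. Qed.

Lemma dot_comm a b : dot a b = dot b a.
Proof. unfold dot; ring. Qed.

Lemma dot_lincomb x P y W x' y' :
  dot (lincomb x P y W) (lincomb x' P y' W) = x * x' * dot P P + (x * y' + y * x') * dot P W + y * y' * dot W W.
Proof. unfold dot, lincomb; simpl; ring. Qed.

Lemma dot_lincomb_r v x P y W : dot v (lincomb x P y W) = x * dot v P + y * dot v W.
Proof. unfold dot, lincomb; simpl; ring. Qed.

Lemma dot_self_eq0 v : dot v v = 0 -> v = vzero.
Proof.
  destruct v as [x y z]; unfold dot; simpl; intro H.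
  assert (x = 0) by nra. assert (y = 0) by nra. assert (z = 0) by nra. subst; reflexivity.
Qed.

Lemma lagrange_identity u v : dot (cross u v) (cross u v) = dot u u * dot v v - dot u v * dot u v.
Proof. unfold dot, cross; simpl; ring. Qed.

Lemma dot_self_nonneg v : 0 <= dot v v.
Proof. unfold dot. nra. Qed.

Lemma cauchy_schwarz_lower u v : - (sqrt (dot u u) * sqrt (dot v v)) <= dot u v.
Proof.
  assert (CS : dot u v * dot u v <= dot u u * dot v v).
  { pose proof (lagrange_identity u v). pose proof (dot_self_nonneg (cross u v)). lra. }
  rewrite <- sqrt_mult by apply dot_self_nonneg.
  assert (Rabs (dot u v) <= sqrt (dot u u * dot v v)).
  { rewrite <- sqrt_Rsqr_abs. apply sqrt_le_1_alt. exact CS. }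
  pose proof (Rabs_maj2 (dot u v)). lra.
Qed.

Lemma unit_eq_of_dot_eq1 a b : dot a a = 1 -> dot b b = 1 -> dot a b = 1 -> a = b.
Proof.
  intros Ha Hb Hab.
  assert (Z : dot (lincomb 1 a (-1) b) (lincomb 1 a (-1) b) = 0)
    by (rewrite dot_lincomb, Ha, Hb, Hab; ring).
  apply dot_self_eq0 in Z. unfold lincomb, vzero in Z. injection Z; intros.
  apply vec3_ext; lra.
Qed.

Lemma det_swap23 a b c : det a c b = - det a b c.
Proof. unfold det, dot, cross; simpl; ring. Qed.

Lemma det_same12 a c : det a a c = 0.
Proof. unfold det, dot, cross; simpl; ring. Qed.

Lemma det_same13 a b : det a b a = 0.
Proof. unfold det, dot, cross; simpl; ring. Qed.

Lemma det_same23 a b : det a b b = 0.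
Proof. unfold det, dot, cross; simpl; ring. Qed.

Lemma det_lincomb3 x1 y1 x2 y2 x3 y3 P W :
  det (lincomb x1 P y1 W) (lincomb x2 P y2 W) (lincomb x3 P y3 W) = 0.
Proof. unfold det, dot, cross, lincomb; simpl; ring. Qed.

Lemma det_lincomb2 x1 y1 x2 y2 P W Z :
  det (lincomb x1 P y1 W) (lincomb x2 P y2 W) Z = (x1 * y2 - y1 * x2) * det P W Z.
Proof. unfold det, dot, cross, lincomb; simpl; ring. Qed.

(* Cramer's rule: [det a b c * n] is a combination of [dot n a], [dot n b], [dot n c]. *)
Lemma det_eq0_of_orthogonal n a b c :
  n <> vzero -> dot n a = 0 -> dot n b = 0 -> dot n c = 0 -> det a b c = 0.
Proof.
  intros Hn Ha Hb Hc.
  destruct (Req_dec (det a b c) 0) as [D|D]; auto. exfalso. apply Hn.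
  assert (Cramer : forall k : vec3 -> R, (k = vx \/ k = vy \/ k = vz) ->
    det a b c * k n = dot n a * k (cross b c) + dot n b * k (cross c a) + dot n c * k (cross a b)).
  { intros k [-> | [-> | ->]]; unfold det, dot, cross; simpl; ring. }
  rewrite Ha, Hb, Hc in Cramer.
  apply vec3_ext; apply (Rmult_eq_reg_l (det a b c)); auto; simpl;
    rewrite Cramer by auto; ring.
Qed.

Lemma dot_circ P W s u : orthonormal P W -> dot (circ P W s) (circ P W u) = cos (s - u).
Proof.
  intros (PP & WW & PW). unfold circ. rewrite dot_lincomb, PP, WW, PW, cos_minus. ring.
Qed.

Lemma dot_circ_self P W t : orthonormal P W -> dot (circ P W t) (circ P W t) = 1.
Proof. intro H. rewrite dot_circ, Rminus_diag by exact H. apply cos_0. Qed.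

Lemma circ_0 P W : circ P W 0 = P.
Proof. apply vec3_ext; unfold circ, lincomb; simpl; rewrite cos_0, sin_0; ring. Qed.

Lemma circ_PI2 P W : circ P W (PI / 2) = W.
Proof. apply vec3_ext; unfold circ, lincomb; simpl; rewrite cos_PI2, sin_PI2; ring. Qed.

Lemma circ_plus_PI P W t : circ P W (t + PI) = vopp (circ P W t).
Proof. apply vec3_ext; unfold circ, lincomb, vopp; simpl; rewrite neg_cos, neg_sin; ring. Qed.

Lemma circ_sub P W s s0 :
  circ P W (s - s0) = circ (lincomb (cos s0) P (- sin s0) W) (lincomb (sin s0) P (cos s0) W) s.
Proof. apply vec3_ext; unfold circ, lincomb; simpl; rewrite cos_minus, sin_minus; ring. Qed.

Lemma orthonormal_complete P : dot P P = 1 -> exists W, orthonormal P W.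
Proof.
  destruct P as [p1 p2 p3]; unfold orthonormal, dot; simpl; intro H.
  destruct (Req_EM_T (p1 * p1 + p2 * p2) 0) as [Z|Z].
  - exists (Vec3 1 0 0); simpl. assert (p1 = 0) by nra. subst. repeat split; [lra | ring | ring].
  - assert (Hq : 0 < p1 * p1 + p2 * p2) by nra.
    set (q := sqrt (p1 * p1 + p2 * p2)).
    assert (Hq1 : q * q = p1 * p1 + p2 * p2) by (apply sqrt_sqrt; lra).
    assert (Hq2 : 0 < q) by (apply sqrt_lt_R0; lra).
    exists (Vec3 (- p2 / q) (p1 / q) 0); simpl. repeat split; [lra | |field; lra].
    transitivity ((p1 * p1 + p2 * p2) / (q * q)); [field; lra | rewrite Hq1; field; lra].
Qed.

Lemma orthonormal_cross P W :
  orthonormal P W -> orthonormal P (cross P W) /\ orthonormal W (cross P W) /\ det P W (cross P W) = 1.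
Proof.
  intros (PP & WW & PW).
  assert (NN : dot (cross P W) (cross P W) = 1) by (rewrite lagrange_identity, PP, WW, PW; ring).
  unfold orthonormal, det. repeat split; auto; rewrite dot_comm; [apply det_same13 | apply det_same23].
Qed.

Lemma orthonormal_vopp P W : orthonormal P W -> orthonormal P (vopp W).
Proof. unfold orthonormal, dot, vopp; simpl. intros (? & ? & ?). repeat split; lra. Qed.

Lemma det_circ2 P W s u Z : det (circ P W s) (circ P W u) Z = sin (u - s) * det P W Z.
Proof. unfold circ. rewrite det_lincomb2, sin_minus. ring. Qed.

Lemma circ_neq_cross P W t : orthonormal P W -> circ P W t <> cross P W.
Proof.
  intros HPW E. destruct (orthonormal_cross P W HPW) as (_ & _ & D).
  rewrite <- E in D. unfold det, circ in D. rewrite dot_lincomb_r in D.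
  fold (det P W P) (det P W W) in D. rewrite det_same13, det_same23 in D. lra.
Qed.

Lemma cos_sin_param x y : x * x + y * y = 1 -> exists t, x = cos t /\ y = sin t.
Proof.
  intro H. assert (Hx : -1 <= x <= 1) by nra.
  assert (Hs : (sqrt (1 - x²))² = y * y) by (rewrite Rsqr_sqrt by (unfold Rsqr; nra); unfold Rsqr; lra).
  destruct (Rle_lt_dec 0 y) as [Hy|Hy].
  - exists (acos x). rewrite cos_acos, sin_acos by auto. split; auto.
    apply Rsqr_inj; [auto | apply sqrt_pos | unfold Rsqr in *; lra].
  - exists (- acos x). rewrite cos_neg, sin_neg, cos_acos, sin_acos by auto. split; auto.
    enough (sqrt (1 - x²) = - y) by lra.
    apply Rsqr_inj; [apply sqrt_pos | lra | unfold Rsqr in *; lra].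
Qed.

(* The component of [Z] normal to the plane of [P], [W] vanishes, because it is orthogonal
   to [P], [W] and to their cross product. *)
Lemma circ_of_det_eq0 P W Z :
  orthonormal P W -> dot Z Z = 1 -> det P W Z = 0 -> exists t, Z = circ P W t.
Proof.
  intros HPW HZ HD. pose proof HPW as (PP & WW & PW).
  set (x := dot Z P). set (y := dot Z W).
  set (e := Vec3 (vx Z - x * vx P - y * vx W) (vy Z - x * vy P - y * vy W) (vz Z - x * vz P - y * vz W)).
  assert (eP : dot e P = 0).
  { transitivity (dot Z P - x * dot P P - y * dot P W); [unfold e, dot; simpl; ring|].
    rewrite PP, PW. unfold x; ring. }
  assert (eW : dot e W = 0).
  { transitivity (dot Z W - x * dot P W - y * dot W W); [unfold e, dot; simpl; ring|].
    rewrite WW, PW. unfold y; ring. }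
  assert (eN : dot e (cross P W) = 0).
  { transitivity (det P W Z - x * det P W P - y * det P W W); [unfold e, det, dot, cross; simpl; ring|].
    rewrite HD, det_same13, det_same23. ring. }
  assert (Lag := lagrange_identity e (cross P W)).
  replace (cross e (cross P W)) with (lincomb (dot e W) P (- dot e P) W) in Lag
    by (apply vec3_ext; unfold cross, lincomb, dot; simpl; ring).
  rewrite eP, eW, eN, (lagrange_identity P W), PP, WW, PW, dot_lincomb in Lag.
  assert (ee : dot e e = 0) by (ring_simplify in Lag; lra).
  apply dot_self_eq0 in ee. unfold e, vzero in ee. injection ee; intros E3 E2 E1.
  assert (ZZ : Z = lincomb x P y W) by (apply vec3_ext; unfold lincomb; simpl; lra).
  assert (Hxy : x * x + y * y = 1).
  { rewrite <- HZ, ZZ, dot_lincomb, PP, WW, PW. ring. }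
  destruct (cos_sin_param x y Hxy) as [t [Ex Ey]]. exists t. unfold circ. rewrite <- Ex, <- Ey. exact ZZ.
Qed.

Lemma orthonormal_of_circ_unit P W a :
  0 < a -> (forall t, dot (circ P W (a * t)) (circ P W (a * t)) = 1) -> orthonormal P W.
Proof.
  intros Ha H.
  pose proof (H 0) as H0. pose proof (H (PI / (2 * a))) as H1. pose proof (H (PI / (4 * a))) as H2.
  unfold circ in H0, H1, H2. rewrite dot_lincomb in H0, H1, H2.
  rewrite Rmult_0_r, cos_0, sin_0 in H0.
  replace (a * (PI / (2 * a))) with (PI / 2) in H1 by (field; lra).
  replace (a * (PI / (4 * a))) with (PI / 4) in H2 by (field; lra).
  rewrite cos_PI2, sin_PI2 in H1. rewrite cos_PI4, sin_PI4 in H2.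
  assert (E : 1 / sqrt 2 * (1 / sqrt 2) = 1 / 2).
  { assert (Sq : sqrt 2 * sqrt 2 = 2) by (apply sqrt_sqrt; lra).
    assert (0 < sqrt 2) by (apply sqrt_lt_R0; lra).
    transitivity (1 / (sqrt 2 * sqrt 2)); [field; lra | rewrite Sq; reflexivity]. }
  rewrite E in H2. unfold orthonormal. lra.
Qed.

(* The second argument of [circ] is the unit vector orthogonal to [g0] in the plane of [g0], [g1]. *)
Lemma circ_of_dots x g0 g1 D al :
  dot x x = 1 -> dot g0 g0 = 1 -> dot g1 g1 = 1 -> dot g0 g1 = cos D -> 0 < sin D ->
  dot x g0 = cos al -> dot x g1 = cos (al - D) ->
  x = circ g0 (lincomb (- cos D / sin D) g0 (1 / sin D) g1) al.
Proof.
  intros Hx H0 H1 H01 HS Hx0 Hx1.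
  set (V := lincomb (- cos D / sin D) g0 (1 / sin D) g1).
  pose proof (sin2_cos2 D) as SC. unfold Rsqr in SC.
  assert (Hg0V : orthonormal g0 V).
  { split; [exact H0 | split].
    - unfold V. rewrite dot_lincomb, H0, H1, H01.
      transitivity ((1 - cos D * cos D) / (sin D * sin D)); [field; lra|].
      replace (1 - cos D * cos D) with (sin D * sin D) by lra. field. lra.
    - unfold V. rewrite dot_lincomb_r, H0, H01. field. lra. }
  apply unit_eq_of_dot_eq1; [exact Hx | apply dot_circ_self, Hg0V |].
  unfold circ, V. rewrite !dot_lincomb_r, Hx0, Hx1, cos_minus.
  pose proof (sin2_cos2 al) as SCa. unfold Rsqr in SCa.
  transitivity (sin al * sin al + cos al * cos al); [field; lra | exact SCa].
Qed.

(** * The unit sphere *)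

Definition vec_of (p : S2) : vec3 := Vec3 (s2x p) (s2y p) (s2z p).

Lemma dot_vec_of p q : dot (vec_of p) (vec_of q) = s2dot p q.
Proof. reflexivity. Qed.

Lemma s2dot_self p : s2dot p p = 1.
Proof. destruct p; unfold s2dot; simpl; lra. Qed.

Lemma dot_vec_of_self p : dot (vec_of p) (vec_of p) = 1.
Proof. apply s2dot_self. Qed.

Lemma vec_of_inj p q : vec_of p = vec_of q -> p = q.
Proof.
  destruct p as [x1 y1 z1 H1], q as [x2 y2 z2 H2]; unfold vec_of; simpl.
  intro E. injection E; intros; subst. f_equal. apply proof_irrelevance.
Qed.

(* Vectors that are not of unit length are sent to the junk value [(0, 0, 1)]. *)
Definition unit_of (v : vec3) : S2 :=
  match Req_EM_T (vx v * vx v + vy v * vy v + vz v * vz v) 1 with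
  | left H => mkS2 _ _ _ H
  | right _ => mkS2 0 0 1 ltac:(ring)
  end.

Lemma vec_of_unit_of v : dot v v = 1 -> vec_of (unit_of v) = v.
Proof.
  intro H. unfold unit_of. destruct (Req_EM_T _ _) as [H'|H'].
  - destruct v; reflexivity.
  - exfalso; exact (H' H).
Qed.

Definition antipode (p : S2) : S2 := unit_of (vopp (vec_of p)).

Lemma vec_of_antipode p : vec_of (antipode p) = vopp (vec_of p).
Proof.
  apply vec_of_unit_of. rewrite <- (dot_vec_of_self p). unfold dot, vopp; simpl; ring.
Qed.

Lemma antipode_neq p : antipode p <> p.
Proof.
  intro E. apply (f_equal vec_of) in E. rewrite vec_of_antipode in E.
  pose proof (dot_vec_of_self p) as U.
  destruct (vec_of p) as [x y z]; unfold vopp, dot in *; simpl in *.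
  injection E; intros. nra.
Qed.

Lemma s2dot_bound p q : -1 <= s2dot p q <= 1.
Proof.
  destruct p as [x1 y1 z1 H1], q as [x2 y2 z2 H2]; unfold s2dot; simpl.
  pose proof (pow2_ge_0 (x1 - x2)). pose proof (pow2_ge_0 (y1 - y2)). pose proof (pow2_ge_0 (z1 - z2)).
  pose proof (pow2_ge_0 (x1 + x2)). pose proof (pow2_ge_0 (y1 + y2)). pose proof (pow2_ge_0 (z1 + z2)).
  split; nra.
Qed.

Lemma s2dot_eq1 p q : s2dot p q = 1 -> p = q.
Proof.
  intro H. apply vec_of_inj, unit_eq_of_dot_eq1; auto using dot_vec_of_self.
Qed.

Lemma s2dot_eqm1 p q : s2dot p q = -1 -> q = antipode p.
Proof.
  intro H. apply s2dot_eq1. rewrite <- dot_vec_of, vec_of_antipode.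
  rewrite <- dot_vec_of in H. unfold dot, vopp in *; simpl in *; lra.
Qed.

Lemma s2dot_pm1 p q : s2dot p q * s2dot p q = 1 -> q = p \/ q = antipode p.
Proof.
  intro H. pose proof (s2dot_bound p q).
  assert (s2dot p q = 1 \/ s2dot p q = -1) as [E|E] by nra.
  - left. symmetry. apply s2dot_eq1, E.
  - right. apply s2dot_eqm1, E.
Qed.

Lemma cross_neq_vzero u v : v <> u -> v <> antipode u -> cross (vec_of u) (vec_of v) <> vzero.
Proof.
  intros Hvu Hanti E.
  assert (N : dot (cross (vec_of u) (vec_of v)) (cross (vec_of u) (vec_of v)) = 0)
    by (rewrite E; unfold dot, vzero; simpl; ring).
  rewrite lagrange_identity, !dot_vec_of_self, dot_vec_of in N.
  destruct (s2dot_pm1 u v ltac:(lra)); auto.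
Qed.

Lemma dS2_nonneg p q : 0 <= dS2 p q.
Proof. apply acos_bound. Qed.

(* With [d = cos A], [e = cos B], the cosine formula for [A + B] compares [s2dot p r] with
   [d e - sin A sin B], and the defect is the inner product of the components of [p] and [r]
   orthogonal to [q], whose norms are [sin A] and [sin B]. *)
Lemma dS2_triangle p q r : dS2 p r <= dS2 p q + dS2 q r.
Proof.
  unfold dS2.
  pose proof (acos_bound (s2dot p q)). pose proof (acos_bound (s2dot q r)).
  pose proof (acos_bound (s2dot p r)).
  pose proof (s2dot_bound p q). pose proof (s2dot_bound q r). pose proof (s2dot_bound p r).
  set (d := s2dot p q) in *. set (e := s2dot q r) in *.
  destruct (Rle_lt_dec PI (acos d + acos e)) as [Hs|Hs]; [lra|].
  assert (Hcos : cos (acos d + acos e) <= s2dot p r).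
  { rewrite cos_plus, !cos_acos, !sin_acos by lra.
    set (u := lincomb 1 (vec_of p) (- d) (vec_of q)). set (w := lincomb 1 (vec_of r) (- e) (vec_of q)).
    assert (Hu : dot u u = 1 - d²).
    { unfold u. rewrite dot_lincomb, !dot_vec_of_self, dot_vec_of. fold d. unfold Rsqr; ring. }
    assert (Hw : dot w w = 1 - e²).
    { unfold w. rewrite dot_lincomb, !dot_vec_of_self, (dot_comm (vec_of r)), dot_vec_of. fold e.
      unfold Rsqr; ring. }
    assert (Huw : dot u w = s2dot p r - d * e).
    { replace (dot u w) with (dot (vec_of p) (vec_of r) - e * dot (vec_of p) (vec_of q)
          - d * dot (vec_of q) (vec_of r) + d * e * dot (vec_of q) (vec_of q))
        by (unfold u, w, dot, lincomb; simpl; ring).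
      rewrite dot_vec_of_self, !dot_vec_of. fold d e. ring. }
    pose proof (cauchy_schwarz_lower u w) as CS. rewrite Hu, Hw, Huw in CS. lra. }
  destruct (Rle_lt_dec (acos (s2dot p r)) (acos d + acos e)) as [Hle|Hlt]; [exact Hle|].
  exfalso.
  assert (Hc : cos (acos (s2dot p r)) < cos (acos d + acos e)) by (apply cos_decreasing_1; lra).
  rewrite cos_acos in Hc by lra. lra.
Qed.

(** * Real functions determined by local data *)

Lemma Rabs_sub_diag_lt t e : 0 < e -> Rabs (t - t) < e.
Proof. intro He. rewrite Rminus_diag, Rabs_R0. exact He. Qed.

Lemma is_derive_near (h F : R -> R) t0 e t l :
  (forall s, Rabs (s - t0) < e -> h s = F s) -> Rabs (t - t0) < e -> is_derive F t l -> is_derive h t l.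
Proof.
  intros Hh Ht HF. apply (is_derive_ext_loc F); [|exact HF].
  assert (He : 0 < e - Rabs (t - t0)) by lra.
  exists (mkposreal _ He). intros s Hs. symmetry. apply Hh.
  change (Rabs (s - t) < e - Rabs (t - t0)) in Hs.
  pose proof (Rabs_triang (s - t) (t - t0)) as Tri.
  replace (s - t + (t - t0)) with (s - t0) in Tri by ring. lra.
Qed.

Lemma locally_constant_constant (g : R -> R) :
  (forall t, exists e, 0 < e /\ forall s, Rabs (s - t) < e -> g s = g t) -> forall x y, g x = g y.
Proof.
  intros H.
  assert (D : forall t, is_derive g t 0).
  { intro t. destruct (H t) as [e [He Hs]].
    apply (is_derive_near g (fun _ => g t) t e); [exact Hs | apply Rabs_sub_diag_lt, He |].
    auto_derive; auto. }
  assert (K : forall x y, x < y -> g x = g y) by (intros x y Hxy; apply (eq_is_derive g x y); auto).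
  intros x y. destruct (Rtotal_order x y) as [h|[h|h]]; [auto | subst; auto | symmetry; auto].
Qed.

Lemma locally_affine_affine (h : R -> R) :
  (forall t0, exists e, 0 < e /\ exists k m, forall t, Rabs (t - t0) < e -> h t = k * t + m) ->
  exists k m, forall t, h t = k * t + m.
Proof.
  intros H.
  assert (D : forall t0, exists e, 0 < e /\ exists k m, forall t, Rabs (t - t0) < e ->
    Derive h t = k /\ h t = k * t + m).
  { intro t0. destruct (H t0) as [e [He [k [m Hk]]]]. exists e; split; [exact He|]. exists k, m.
    intros t Ht. split; [|exact (Hk t Ht)].
    apply is_derive_unique, (is_derive_near h (fun s => k * s + m) t0 e); auto.
    auto_derive; auto; ring. }
  set (K := Derive h 0).
  assert (DK : forall x, Derive h x = K).
  { intro x. apply locally_constant_constant. intro t0.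
    destruct (D t0) as [e [He [k [m Hk]]]]. exists e; split; [exact He|].
    intros s Hs. rewrite (proj1 (Hk s Hs)), (proj1 (Hk t0 (Rabs_sub_diag_lt t0 e He))).
    reflexivity. }
  exists K, (h 0). intro t.
  enough (h t - K * t = h 0 - K * 0) by lra.
  apply (locally_constant_constant (fun x => h x - K * x)). intro t0.
  destruct (D t0) as [e [He [k [m Hk]]]]. exists e; split; [exact He|].
  intros s Hs. destruct (Hk s Hs) as [Ds Es], (Hk t0 (Rabs_sub_diag_lt t0 e He)) as [D0 E0].
  rewrite Es, E0, <- Ds, DK. ring.
Qed.

(* The coefficients of [x] on [cos (al t)] and [sin (al t)] are recovered from [x t] and
   [Derive x t] as [A t] and [B t], which are therefore locally constant. *)
Lemma locally_harmonic_harmonic (al : R) (x : R -> R) : 0 < al ->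
  (forall t0, exists e, 0 < e /\ exists a b, forall t, Rabs (t - t0) < e ->
     x t = a * cos (al * t) + b * sin (al * t)) ->
  exists a b, forall t, x t = a * cos (al * t) + b * sin (al * t).
Proof.
  intros Hal H.
  set (A := fun t => cos (al * t) * x t - sin (al * t) * Derive x t / al).
  set (B := fun t => sin (al * t) * x t + cos (al * t) * Derive x t / al).
  assert (D : forall t0, exists e, 0 < e /\ exists a b, forall t, Rabs (t - t0) < e -> A t = a /\ B t = b).
  { intro t0. destruct (H t0) as [e [He [a [b Hab]]]]. exists e; split; [exact He|]. exists a, b.
    intros t Ht.
    assert (Dx : Derive x t = al * (- a * sin (al * t) + b * cos (al * t))).
    { apply is_derive_unique, (is_derive_near x (fun s => a * cos (al * s) + b * sin (al * s)) t0 e); auto.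
      auto_derive; auto; ring. }
    unfold A, B. rewrite Dx, (Hab t Ht). pose proof (sin2_cos2 (al * t)) as SC. unfold Rsqr in SC.
    split.
    - transitivity (a * (sin (al * t) * sin (al * t) + cos (al * t) * cos (al * t)));
        [field; lra | rewrite SC; ring].
    - transitivity (b * (sin (al * t) * sin (al * t) + cos (al * t) * cos (al * t)));
        [field; lra | rewrite SC; ring]. }
  assert (Const : forall F : R -> R, (F = A \/ F = B) -> forall t, F t = F 0).
  { intros F HF t. apply locally_constant_constant. intro t0.
    destruct (D t0) as [e [He [a [b Hab]]]]. exists e; split; [exact He|]. intros s Hs.
    destruct (Hab s Hs), (Hab t0 (Rabs_sub_diag_lt t0 e He)).
    destruct HF; subst F; congruence. }
  exists (A 0), (B 0). intro t.
  rewrite <- (Const A (or_introl eq_refl) t), <- (Const B (or_intror eq_refl) t). unfold A, B.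
  pose proof (sin2_cos2 (al * t)) as SC. unfold Rsqr in SC.
  transitivity (x t * (sin (al * t) * sin (al * t) + cos (al * t) * cos (al * t)));
    [rewrite SC; ring | field; lra].
Qed.

Lemma locally_circ_circ (al : R) (F : R -> vec3) : 0 < al ->
  (forall t0, exists e, 0 < e /\ exists P W, forall t, Rabs (t - t0) < e -> F t = circ P W (al * t)) ->
  exists P W, forall t, F t = circ P W (al * t).
Proof.
  intros Hal H.
  assert (Coord : forall k : vec3 -> R, (k = vx \/ k = vy \/ k = vz) ->
    exists a b, forall t, k (F t) = a * cos (al * t) + b * sin (al * t)).
  { intros k Hk. apply locally_harmonic_harmonic; [exact Hal|]. intro t0.
    destruct (H t0) as [e [He [P [W HPW]]]]. exists e; split; [exact He|]. exists (k P), (k W).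
    intros t Ht. rewrite (HPW t Ht). destruct Hk as [-> | [-> | ->]]; unfold circ, lincomb; simpl; ring. }
  destruct (Coord vx (or_introl eq_refl)) as [a1 [b1 E1]].
  destruct (Coord vy (or_intror (or_introl eq_refl))) as [a2 [b2 E2]].
  destruct (Coord vz (or_intror (or_intror eq_refl))) as [a3 [b3 E3]].
  exists (Vec3 a1 a2 a3), (Vec3 b1 b2 b3). intro t.
  apply vec3_ext; unfold circ, lincomb; simpl; [rewrite E1 | rewrite E2 | rewrite E3]; ring.
Qed.

(** * Geodesics of S^2 x R *)

Definition helix_params (P W : vec3) (a b : R) : Prop :=
  orthonormal P W /\ a * a + b * b = 1 /\ 0 <= a.

Definition helix (P W : vec3) (a b r : R) (x : M) : Prop :=
  exists t, vec_of (fst x) = circ P W (a * t) /\ snd x = b * t + r.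

Definition helix_curve (P W : vec3) (a b r t : R) : M := (unit_of (circ P W (a * t)), b * t + r).

Lemma acos_cos_abs x : Rabs x <= PI -> acos (cos x) = Rabs x.
Proof.
  intro H. destruct (Rle_lt_dec 0 x).
  - rewrite Rabs_right in * by lra. apply acos_cos. lra.
  - rewrite Rabs_left in * by lra. rewrite <- cos_neg. apply acos_cos. lra.
Qed.

Lemma helix_curve_isometric P W a b r : helix_params P W a b -> locally_isometric (helix_curve P W a b r).
Proof.
  intros (HPW & Hab & Ha) t. exists (PI / 2). split; [pose proof PI_RGT_0; lra|].
  intros s u Hs Hu. unfold distM, dS2, helix_curve; cbn [fst snd].
  rewrite <- dot_vec_of, !vec_of_unit_of, dot_circ by (auto using dot_circ_self).
  assert (Hsu : Rabs (s - u) < PI).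
  { pose proof (Rabs_triang (s - t) (t - u)) as Tri. replace (s - t + (t - u)) with (s - u) in Tri by ring.
    rewrite Rabs_minus_sym in Hu. lra. }
  replace (a * s - a * u) with (a * (s - u)) by ring.
  assert (Ha1 : a <= 1) by nra.
  rewrite acos_cos_abs, Rabs_mult, (Rabs_right a) by
    (try rewrite Rabs_mult, (Rabs_right a); pose proof (Rabs_pos (s - u)); nra).
  replace ((b * s + r - (b * u + r)) ^ 2) with (b * b * Rabs (s - u) ^ 2) by (rewrite pow2_abs; ring).
  replace ((a * Rabs (s - u)) ^ 2 + b * b * Rabs (s - u) ^ 2) with ((a * a + b * b) * Rabs (s - u) ^ 2) by ring.
  rewrite Hab, Rmult_1_l. apply sqrt_pow2, Rabs_pos.
Qed.

Lemma helix_geodesic P W a b r : helix_params P W a b -> geodesic (helix P W a b r).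
Proof.
  intro Hp. exists (helix_curve P W a b r). split; [apply helix_curve_isometric, Hp|].
  destruct Hp as (HPW & _).
  intros [p h]; simpl. split.
  - intros [t [E1 E2]]. exists t. unfold helix_curve. simpl in *. f_equal; [|auto].
    apply vec_of_inj. rewrite vec_of_unit_of by (apply dot_circ_self, HPW). auto.
  - intros [t E]. exists t. unfold helix_curve in E. injection E; intros; subst. simpl.
    rewrite vec_of_unit_of by (apply dot_circ_self, HPW). auto.
Qed.

(* Equality case of Minkowski's inequality: the norms of [(A, d1)] and [(B, d2)] add up to
   the norm of [(D, d1 + d2)], which is at most that of [(A + B, d1 + d2)], so the two
   vectors are parallel. *)
Lemma minkowski_equality_parallel X Y A B D d1 d2 :
  0 < X -> 0 < Y -> 0 <= A -> 0 <= B -> 0 <= D -> D <= A + B ->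
  A * A + d1 * d1 = X * X -> B * B + d2 * d2 = Y * Y -> D * D + (d1 + d2) * (d1 + d2) = (X + Y) * (X + Y) ->
  d1 * Y = d2 * X.
Proof.
  intros HX HY HA HB HD HDAB E1 E2 E3.
  assert (HDD : D * D <= (A + B) * (A + B)) by nra.
  assert (S1 : X * Y <= A * B + d1 * d2) by nra.
  assert (I : (A * B + d1 * d2) * (A * B + d1 * d2) + (A * d2 - B * d1) * (A * d2 - B * d1) = (X * X) * (Y * Y))
    by (rewrite <- E1, <- E2; ring).
  assert (HXY : 0 < X * Y) by nra.
  assert (S2 : (X * Y) * (X * Y) <= (A * B + d1 * d2) * (A * B + d1 * d2)) by nra.
  assert (Z : (A * d2 - B * d1) * (A * d2 - B * d1) = 0)
    by (pose proof (Rle_0_sqr (A * d2 - B * d1)); unfold Rsqr in *; lra).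
  assert (Z2 : A * d2 = B * d1) by nra.
  assert (A <= X) by nra. assert (B <= Y) by nra.
  assert (Hd : 0 <= d1 * d2) by nra.
  assert (Sq : (d1 * Y) * (d1 * Y) = (d2 * X) * (d2 * X)).
  { transitivity (d1 * d1 * (B * B + d2 * d2)); [rewrite E2; ring|].
    transitivity ((B * d1) * (B * d1) + d1 * d1 * d2 * d2); [ring|]. rewrite <- Z2.
    transitivity (d2 * d2 * (A * A + d1 * d1)); [ring|]. rewrite E1; ring. }
  assert (0 <= (d1 * Y) * (d2 * X)) by (replace ((d1 * Y) * (d2 * X)) with ((d1 * d2) * (X * Y)) by ring; nra).
  assert (F : (d1 * Y - d2 * X) * (d1 * Y + d2 * X) = 0) by lra.
  apply Rmult_integral in F. destruct F as [F|F]; nra.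
Qed.

Lemma affine_of_collinear (h : R -> R) t0 e : 0 < e ->
  (forall s t u, Rabs (s - t0) < e -> Rabs (t - t0) < e -> Rabs (u - t0) < e -> s < t -> t < u ->
     (h t - h s) * (u - t) = (h u - h t) * (t - s)) ->
  exists k m, forall t, Rabs (t - t0) < e -> h t = k * t + m.
Proof.
  intros He Col.
  set (L := t0 - e / 2). set (U := t0 + e / 2).
  assert (HL : Rabs (L - t0) < e) by (unfold L; rewrite Rabs_left by lra; lra).
  assert (HU : Rabs (U - t0) < e) by (unfold U; rewrite Rabs_right by lra; lra).
  assert (HLU : L < U) by (unfold L, U; lra).
  exists ((h U - h L) / (U - L)), (h L - (h U - h L) / (U - L) * L).
  intros t Ht. apply (Rmult_eq_reg_r (U - L)); [|lra].
  replace (((h U - h L) / (U - L) * t + (h L - (h U - h L) / (U - L) * L)) * (U - L))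
    with ((h U - h L) * (t - L) + h L * (U - L)) by (field; lra).
  destruct (Rtotal_order t L) as [T|[T|T]]; [| subst t; ring |].
  - pose proof (Col t L U Ht HL HU T HLU). nra.
  - destruct (Rtotal_order t U) as [T2|[T2|T2]]; [| subst t; ring |].
    + pose proof (Col L t U HL Ht HU T T2). nra.
    + pose proof (Col L U t HL HU Ht HLU T2). nra.
Qed.

Lemma locally_isometric_sq c : locally_isometric c -> forall t0, exists e, 0 < e /\ forall s u,
  Rabs (s - t0) < e -> Rabs (u - t0) < e ->
  dS2 (fst (c s)) (fst (c u)) * dS2 (fst (c s)) (fst (c u))
    + (snd (c s) - snd (c u)) * (snd (c s) - snd (c u)) = (s - u) * (s - u).
Proof.
  intros Hc t0. destruct (Hc t0) as [e [He H]]. exists e; split; [exact He|].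
  intros s u Hs Hu. specialize (H s u Hs Hu). unfold distM in H.
  set (X := dS2 (fst (c s)) (fst (c u)) ^ 2 + (snd (c s) - snd (c u)) ^ 2) in H.
  assert (HX : 0 <= X)
    by (unfold X; pose proof (pow2_ge_0 (dS2 (fst (c s)) (fst (c u))));
        pose proof (pow2_ge_0 (snd (c s) - snd (c u))); lra).
  pose proof (Rsqr_sqrt X HX) as E. rewrite H in E. unfold Rsqr in E.
  rewrite <- Rabs_mult, Rabs_pos_eq in E by apply Rle_0_sqr. rewrite E. unfold X. ring.
Qed.

Lemma height_affine c : locally_isometric c -> exists b r, forall t, snd (c t) = b * t + r.
Proof.
  intros Hc. apply locally_affine_affine. intro t0.
  destruct (locally_isometric_sq c Hc t0) as [e [He H]]. exists e; split; [exact He|].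
  apply affine_of_collinear; [exact He|].
  intros s t u Hs Ht Hu Hst Htu.
  pose proof (H s t Hs Ht) as Est. pose proof (H t u Ht Hu) as Etu. pose proof (H s u Hs Hu) as Esu.
  apply (minkowski_equality_parallel (t - s) (u - t) (dS2 (fst (c s)) (fst (c t)))
    (dS2 (fst (c t)) (fst (c u))) (dS2 (fst (c s)) (fst (c u)))); auto using dS2_nonneg, dS2_triangle; lra.
Qed.

Lemma sphere_dot_local c b r : locally_isometric c -> (forall t, snd (c t) = b * t + r) ->
  b * b <= 1 /\ forall t0, exists e, 0 < e /\ forall s u, Rabs (s - t0) < e -> Rabs (u - t0) < e ->
    s2dot (fst (c s)) (fst (c u)) = cos (sqrt (1 - b * b) * (s - u)).
Proof.
  intros Hc Hh.
  assert (Hd : forall t0, exists e, 0 < e /\ forall s u, Rabs (s - t0) < e -> Rabs (u - t0) < e ->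
     dS2 (fst (c s)) (fst (c u)) * dS2 (fst (c s)) (fst (c u)) = (1 - b * b) * ((s - u) * (s - u))).
  { intro t0. destruct (locally_isometric_sq c Hc t0) as [e [He H]]. exists e; split; [exact He|].
    intros s u Hs Hu. specialize (H s u Hs Hu). rewrite !Hh in H. lra. }
  assert (Hb : b * b <= 1).
  { destruct (Hd 0) as [e [He H]].
    specialize (H 0 (e / 2) (Rabs_sub_diag_lt 0 e He) ltac:(rewrite Rminus_0_r, Rabs_right; lra)).
    pose proof (Rle_0_sqr (dS2 (fst (c 0)) (fst (c (e / 2))))). unfold Rsqr in *.
    assert (0 < (0 - e / 2) * (0 - e / 2)) by nra. nra. }
  split; [exact Hb|]. intros t0. destruct (Hd t0) as [e [He H]]. exists e; split; [exact He|].
  intros s u Hs Hu. specialize (H s u Hs Hu).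
  set (a := sqrt (1 - b * b)).
  assert (Ha : 0 <= a) by apply sqrt_pos.
  assert (Haa : a * a = 1 - b * b) by (apply sqrt_sqrt; lra).
  assert (Et : dS2 (fst (c s)) (fst (c u)) = a * Rabs (s - u)).
  { apply Rsqr_inj; [apply dS2_nonneg | apply Rmult_le_pos; [exact Ha | apply Rabs_pos] |].
    unfold Rsqr. rewrite H, <- Haa.
    replace (a * Rabs (s - u) * (a * Rabs (s - u))) with ((a * a) * (Rabs (s - u) * Rabs (s - u))) by ring.
    rewrite <- Rabs_mult, Rabs_pos_eq by apply Rle_0_sqr. reflexivity. }
  unfold dS2 in Et. rewrite <- (cos_acos (s2dot (fst (c s)) (fst (c u)))) by apply s2dot_bound.
  rewrite Et. destruct (Rle_lt_dec 0 (s - u)).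
  - rewrite Rabs_right by lra. reflexivity.
  - rewrite Rabs_left by lra. rewrite <- cos_neg. f_equal. ring.
Qed.

Lemma sphere_locally_constant (c : R -> M) :
  (forall t0, exists e, 0 < e /\ forall s, Rabs (s - t0) < e -> fst (c s) = fst (c t0)) ->
  forall t, fst (c t) = fst (c 0).
Proof.
  intros H t.
  assert (Const : forall k : S2 -> R, k (fst (c t)) = k (fst (c 0))).
  { intro k. apply (locally_constant_constant (fun t => k (fst (c t)))). intro t0.
    destruct (H t0) as [e [He Hs]]. exists e; split; [exact He|]. intros s Hs'. rewrite (Hs s Hs'). reflexivity. }
  apply vec_of_inj, vec3_ext; apply Const.
Qed.

(* Nearby points are recovered by [circ_of_dots] from their angles to the points at [t0] and
   [t0 + dl], where [dl] is small enough that [0 < a * dl <= PI / 2]. *)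
Lemma sphere_local_circ (c : R -> M) a : 0 < a ->
  (forall t0, exists e, 0 < e /\ forall s u, Rabs (s - t0) < e -> Rabs (u - t0) < e ->
     s2dot (fst (c s)) (fst (c u)) = cos (a * (s - u))) ->
  forall t0, exists e, 0 < e /\ exists P W, forall t, Rabs (t - t0) < e ->
     vec_of (fst (c t)) = circ P W (a * t).
Proof.
  intros Ha Hd t0. destruct (Hd t0) as [e [He H]]. exists e; split; [exact He|].
  set (dl := Rmin (e / 2) (PI / (2 * a))).
  assert (Hdl : 0 < dl) by (apply Rmin_glb_lt; [lra | pose proof PI_RGT_0; apply Rdiv_lt_0_compat; lra]).
  assert (Hdl1 : dl <= e / 2) by apply Rmin_l.
  assert (Hdl2 : a * dl <= PI / 2).
  { replace (PI / 2) with (a * (PI / (2 * a))) by (field; lra). apply Rmult_le_compat_l; [lra | apply Rmin_r]. }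
  assert (HS : 0 < sin (a * dl)) by (apply sin_gt_0; pose proof PI_RGT_0; nra).
  set (t1 := t0 + dl).
  assert (Ht1 : Rabs (t1 - t0) < e) by (unfold t1; rewrite Rabs_right by lra; lra).
  pose proof (Rabs_sub_diag_lt t0 e He) as Ht0.
  set (g0 := vec_of (fst (c t0))). set (g1 := vec_of (fst (c t1))).
  set (V := lincomb (- cos (a * dl) / sin (a * dl)) g0 (1 / sin (a * dl)) g1).
  exists (lincomb (cos (a * t0)) g0 (- sin (a * t0)) V), (lincomb (sin (a * t0)) g0 (cos (a * t0)) V).
  intros t Ht. rewrite <- circ_sub.
  replace (a * t - a * t0) with (a * (t - t0)) by ring.
  apply circ_of_dots; try apply dot_vec_of_self; try exact HS; unfold g0, g1; rewrite dot_vec_of, H by assumption.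
  - rewrite <- cos_neg. f_equal. unfold t1. ring.
  - reflexivity.
  - f_equal. unfold t1. ring.
Qed.

Lemma isometric_curve_helix c : locally_isometric c -> exists P W a b r, helix_params P W a b /\
  forall t, vec_of (fst (c t)) = circ P W (a * t) /\ snd (c t) = b * t + r.
Proof.
  intros Hc. destruct (height_affine c Hc) as [b [r Hh]].
  destruct (sphere_dot_local c b r Hc Hh) as [Hb Hd].
  set (a := sqrt (1 - b * b)) in *.
  assert (Ha : 0 <= a) by apply sqrt_pos.
  assert (Haa : a * a = 1 - b * b) by (apply sqrt_sqrt; lra).
  destruct (Rle_lt_dec a 0) as [Ha0|Ha0].
  - replace a with 0 in * by lra.
    destruct (orthonormal_complete (vec_of (fst (c 0))) (dot_vec_of_self _)) as [W HW].
    exists (vec_of (fst (c 0))), W, 0, b, r. split; [repeat split; apply HW || lra|].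
    intro t. split; [|apply Hh]. rewrite Rmult_0_l, circ_0. f_equal.
    apply sphere_locally_constant. intro t0. destruct (Hd t0) as [e [He Hs]]. exists e; split; [exact He|].
    intros s Hs'. apply s2dot_eq1. rewrite Hs, Rmult_0_l, cos_0 by auto using Rabs_sub_diag_lt.
    reflexivity.
  - destruct (locally_circ_circ a (fun t => vec_of (fst (c t))) Ha0 (sphere_local_circ c a Ha0 Hd))
      as [P [W HPW]].
    assert (HO : orthonormal P W).
    { apply (orthonormal_of_circ_unit P W a Ha0). intro t. rewrite <- HPW. apply dot_vec_of_self. }
    exists P, W, a, b, r. split; [repeat split; apply HO || lra|]. intro t; split; [apply HPW | apply Hh].
Qed.

Lemma geodesic_helix (G : M -> Prop) : geodesic G ->
  exists P W a b r, helix_params P W a b /\ forall x, G x <-> helix P W a b r x.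
Proof.
  intros [c [Hc HG]]. destruct (isometric_curve_helix c Hc) as (P & W & a & b & r & Hp & Hf).
  exists P, W, a, b, r. split; [exact Hp|]. intro x. rewrite HG. split.
  - intros [t <-]. exists t. apply Hf.
  - intros [t [E1 E2]]. exists t. destruct (Hf t) as [F1 F2].
    destruct x as [p h]. rewrite (surjective_pairing (c t)). simpl in *. f_equal.
    + apply vec_of_inj. congruence.
    + congruence.
Qed.

Definition height_graph (K : M -> Prop) : Prop :=
  (forall h, exists x, K x /\ snd x = h) /\ (forall x x', K x -> K x' -> snd x = snd x' -> x = x').

Definition great_circle (P W : vec3) (h : R) (x : M) : Prop :=
  snd x = h /\ exists t, vec_of (fst x) = circ P W t.

Lemma geodesic_ext G G' : geodesic G -> (forall x, G x <-> G' x) -> geodesic G'.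
Proof. intros [c [Hc HG]] E. exists c. split; [exact Hc|]. intro x. rewrite <- E. apply HG. Qed.

Lemma great_circle_helix P W h x : great_circle P W h x <-> helix P W 1 0 h x.
Proof.
  split.
  - intros [Eh [t Et]]. exists t. rewrite Rmult_1_l, Rmult_0_l, Rplus_0_l. auto.
  - intros [t [Et Eh]]. rewrite Rmult_1_l in Et. rewrite Rmult_0_l, Rplus_0_l in Eh. split; eauto.
Qed.

Lemma great_circle_horizontal P W h : orthonormal P W -> horizontal (great_circle P W h).
Proof.
  intro HPW. split.
  - apply (geodesic_ext (helix P W 1 0 h)); [apply helix_geodesic; repeat split; apply HPW || lra|].
    intro x. symmetry. apply great_circle_helix.
  - exists h. intros x [Eh _]. exact Eh.
Qed.

Lemma geodesic_horizontal_or_graph K : geodesic K -> horizontal K \/ height_graph K.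
Proof.
  intros HK. destruct (geodesic_helix K HK) as (P & W & a & b & r & (HPW & _ & _) & HE).
  destruct (Req_dec b 0) as [Hb|Hb].
  - left. split; [exact HK|]. exists r. intros x Kx.
    apply HE in Kx. destruct Kx as [t [_ E]]. rewrite E, Hb; ring.
  - right. split.
    + intro y. set (t := (y - r) / b). exists (unit_of (circ P W (a * t)), b * t + r).
      split; [apply HE; exists t; simpl; rewrite vec_of_unit_of by (apply dot_circ_self, HPW); auto|].
      simpl. unfold t. field. exact Hb.
    + intros x x' Kx Kx' Eh. apply HE in Kx. apply HE in Kx'.
      destruct Kx as [t [E1 E2]], Kx' as [t' [E1' E2']].
      assert (t = t') by (apply (Rmult_eq_reg_l b); [lra | exact Hb]). subst t'.
      destruct x as [p h], x' as [p' h']. simpl in *. f_equal; [apply vec_of_inj; congruence | congruence].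
Qed.

Lemma horizontal_great_circle K : horizontal K ->
  exists P W h, orthonormal P W /\ forall x, K x <-> great_circle P W h x.
Proof.
  intros [HK [h0 Hh]]. destruct (geodesic_helix K HK) as (P & W & a & b & r & (HPW & Hab & Ha) & HE).
  assert (Kt : forall t, snd (unit_of (circ P W (a * t)), b * t + r) = h0).
  { intro t. apply Hh, HE. exists t. simpl. rewrite vec_of_unit_of by (apply dot_circ_self, HPW). auto. }
  pose proof (Kt 0) as K0. pose proof (Kt 1) as K1. simpl in K0, K1.
  assert (b = 0) by lra. subst b. assert (a = 1) by nra. subst a.
  exists P, W, r. split; [exact HPW|]. intro x. rewrite HE. symmetry. apply great_circle_helix.
Qed.

Lemma geodesic_coplanar K x y z : geodesic K -> K x -> K y -> K z ->
  det (vec_of (fst x)) (vec_of (fst y)) (vec_of (fst z)) = 0.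
Proof.
  intros HK Kx Ky Kz. destruct (geodesic_helix K HK) as (P & W & a & b & r & _ & HE).
  destruct (proj1 (HE x) Kx) as [tx [Ex _]], (proj1 (HE y) Ky) as [ty [Ey _]], (proj1 (HE z) Kz) as [tz [Ez _]].
  rewrite Ex, Ey, Ez. apply det_lincomb3.
Qed.

Lemma great_circle_antipode P W h x : great_circle P W h x -> great_circle P W h (antipode (fst x), snd x).
Proof.
  intros [Eh [t Et]]. split; [exact Eh|]. exists (t + PI). simpl.
  rewrite vec_of_antipode, Et, circ_plus_PI. reflexivity.
Qed.

Lemma great_circle_through (p q : S2) (h : R) :
  exists W, orthonormal (vec_of p) W /\
    great_circle (vec_of p) W h (p, h) /\ great_circle (vec_of p) W h (q, h).
Proof.
  enough (exists W, orthonormal (vec_of p) W /\ exists t, vec_of q = circ (vec_of p) W t) as [W [HW [t Ht]]].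
  { exists W. split; [exact HW|]. split; split; simpl; eauto. exists 0. rewrite circ_0. reflexivity. }
  set (d := s2dot p q). pose proof (s2dot_bound p q) as Hb. fold d in Hb.
  destruct (Req_dec (d * d) 1) as [Hd|Hd].
  - destruct (orthonormal_complete _ (dot_vec_of_self p)) as [W HW]. exists W. split; [exact HW|].
    destruct (s2dot_pm1 p q Hd) as [-> | ->].
    + exists 0. rewrite circ_0. reflexivity.
    + exists (0 + PI). rewrite circ_plus_PI, circ_0. apply vec_of_antipode.
  - set (sg := sqrt (1 - d * d)).
    assert (Hsg : 0 < sg) by (apply sqrt_lt_R0; nra).
    assert (Hsg2 : sg * sg = 1 - d * d) by (apply sqrt_sqrt; nra).
    set (W := lincomb (- d / sg) (vec_of p) (1 / sg) (vec_of q)).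
    exists W. split; [split; [apply dot_vec_of_self | split]|].
    + unfold W. rewrite dot_lincomb, !dot_vec_of_self, dot_vec_of. fold d.
      transitivity ((1 - d * d) / (sg * sg)); [field; lra | rewrite Hsg2; field; lra].
    + unfold W. rewrite dot_lincomb_r, dot_vec_of_self, dot_vec_of. fold d. field. lra.
    + exists (acos d). unfold circ, W. rewrite cos_acos, sin_acos by lra.
      replace (sqrt (1 - d²)) with sg by (unfold sg, Rsqr; reflexivity).
      apply vec3_ext; unfold lincomb; simpl; field; lra.
Qed.



Lemma vertical_line_geodesic p : geodesic (fun x : M => fst x = p).
Proof.
  destruct (orthonormal_complete _ (dot_vec_of_self p)) as [W HW].
  apply (geodesic_ext (helix (vec_of p) W 0 1 0)); [apply helix_geodesic; repeat split; apply HW || lra|].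
  intro x. split.
  - intros [t [E1 _]]. apply vec_of_inj. rewrite E1, Rmult_0_l, circ_0. reflexivity.
  - intro E. exists (snd x). rewrite Rmult_0_l, circ_0, E. split; [reflexivity | ring].
Qed.

(* A helix with [a = 2 PI / L] winds once around the great circle through [p] and [w] while
   rising from height [r] to [r'] between the parameters [0] and [L]; at the parameter [L / 8]
   it is at angle [PI / 4] from [p], at a height [m] independent of [w]. *)
Lemma helix_through_fiber p r r' : exists m, forall w, orthonormal (vec_of p) w ->
  exists K, geodesic K /\ K (p, r) /\ K (p, r') /\ K (unit_of (circ (vec_of p) w (PI / 4)), m).
Proof.
  pose proof PI_RGT_0. pose proof (Rle_0_sqr (r' - r)). unfold Rsqr in *.
  set (L := sqrt (4 * PI * PI + (r' - r) * (r' - r))).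
  assert (HL2 : L * L = 4 * PI * PI + (r' - r) * (r' - r)) by (apply sqrt_sqrt; nra).
  assert (HL : 0 < L) by (apply sqrt_lt_R0; nra).
  set (a := 2 * PI / L). set (b := (r' - r) / L).
  assert (Hab : a * a + b * b = 1).
  { unfold a, b. transitivity ((4 * PI * PI + (r' - r) * (r' - r)) / (L * L)); [field; lra|].
    rewrite HL2. field. nra. }
  exists (b * (L / 8) + r). intros w Hw.
  exists (helix (vec_of p) w a b r). split; [apply helix_geodesic; split; [exact Hw | split; [exact Hab|]]|].
  { unfold a. apply Rlt_le, Rdiv_lt_0_compat; lra. }
  split; [|split].
  - exists 0. rewrite Rmult_0_r, circ_0. split; [reflexivity | simpl; ring].
  - exists L. replace (a * L) with (2 * PI) by (unfold a; field; lra). split.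
    + apply vec3_ext; unfold circ, lincomb; simpl; rewrite cos_2PI, sin_2PI; ring.
    + simpl. unfold b. field. lra.
  - exists (L / 8). simpl. replace (a * (L / 8)) with (PI / 4) by (unfold a; field; lra).
    split; [apply vec_of_unit_of, dot_circ_self, Hw | reflexivity].
Qed.

Lemma small_circle_noncoplanar P E : orthonormal P E ->
  det (circ P E (PI / 4)) (circ P (cross P E) (PI / 4)) (circ P (vopp E) (PI / 4)) <> 0.
Proof.
  intro HPE. destruct (orthonormal_cross P E HPE) as (_ & _ & D).
  unfold circ. rewrite sin_PI4, cos_PI4. set (c := 1 / sqrt 2).
  assert (Hc : 0 < c) by (apply Rdiv_lt_0_compat; [lra | apply sqrt_lt_R0; lra]).
  clearbody c.
  replace (det (lincomb c P c E) (lincomb c P c (cross P E)) (lincomb c P c (vopp E)))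
    with (2 * c * c * c * det P E (cross P E)) by (unfold det, dot, cross, lincomb, vopp; simpl; ring).
  rewrite D. assert (0 < c * c * c) by (repeat apply Rmult_lt_0_compat; lra). lra.
Qed.

(** * Geodesic-preserving bijections *)

Lemma image_of (f : M -> M) (G : M -> Prop) x : G x -> image f G (f x).
Proof. intro H. exists x; auto. Qed.

Section GeodesicPreservingBijection.

Variables f g : M -> M.
Hypothesis g_f : forall x, g (f x) = x.
Hypothesis f_g : forall y, f (g y) = y.
Hypothesis f_geodesic : geodesic_preserving f.

Lemma image_iff G y : image f G y <-> G (g y).
Proof.
  split.
  - intros [x [Gx <-]]. rewrite g_f. exact Gx.
  - intro H. exists (g y). auto.
Qed.

Lemma f_inj x y : f x = f y -> x = y.
Proof. intro E. rewrite <- (g_f x), <- (g_f y), E. reflexivity. Qed.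

Lemma image_heights_distinct K z1 z2 w1 w2 : geodesic K -> K z1 -> K z2 -> snd (f z1) <> snd (f z2) ->
  K w1 -> K w2 -> w1 <> w2 -> snd (f w1) <> snd (f w2).
Proof.
  intros HK K1 K2 Hz W1 W2 Hw E.
  destruct (geodesic_horizontal_or_graph _ (f_geodesic K HK)) as [[_ [r Hr]] | [_ Inj]].
  - apply Hz. rewrite (Hr _ (image_of f K z1 K1)), (Hr _ (image_of f K z2 K2)). reflexivity.
  - apply Hw, f_inj, Inj; auto; apply image_of; auto.
Qed.

(* Every great circle through [p] also passes through [antipode p]: the separation of image
   heights spreads from [p], [q] to [p], [antipode p], then to all antipodal pairs, then to all
   pairs of the slice. *)
Lemma slice_heights_distinct r p q : q <> p -> snd (f (p, r)) <> snd (f (q, r)) ->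
  forall z1 z2, snd z1 = r -> snd z2 = r -> z1 <> z2 -> snd (f z1) <> snd (f z2).
Proof.
  intros Hqp Hpq.
  assert (Antipodal : forall q', snd (f (q', r)) <> snd (f (antipode q', r))).
  { assert (Hp : snd (f (p, r)) <> snd (f (antipode p, r))).
    { destruct (great_circle_through p q r) as [W [HW [Cp Cq]]].
      apply (image_heights_distinct _ _ _ _ _ (proj1 (great_circle_horizontal _ _ r HW)) Cp Cq Hpq Cp
        (great_circle_antipode _ _ _ _ Cp)).
      intro E. injection E. apply not_eq_sym, antipode_neq. }
    intro q'. destruct (great_circle_through p q' r) as [W [HW [Cp Cq]]].
    apply (image_heights_distinct _ _ _ _ _ (proj1 (great_circle_horizontal _ _ r HW)) Cp
      (great_circle_antipode _ _ _ _ Cp) Hp Cq (great_circle_antipode _ _ _ _ Cq)).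
    intro E. injection E. apply not_eq_sym, antipode_neq. }
  intros [q1 h1] [q2 h2] E1 E2 Hne. simpl in E1, E2. subst h1 h2.
  destruct (great_circle_through q1 q2 r) as [W [HW [C1 C2]]].
  exact (image_heights_distinct _ _ _ _ _ (proj1 (great_circle_horizontal _ _ r HW)) C1
    (great_circle_antipode _ _ _ _ C1) (Antipodal q1) C1 C2 Hne).
Qed.

(* If the image of a great circle at height [r] were a height graph, then all points of the
   slice would have distinct image heights, while some point of the circle shares its image
   height with the pole [(cross P W, r)]. *)
Lemma horizontal_image H : horizontal H -> horizontal (image f H).
Proof.
  intros HH.
  destruct (geodesic_horizontal_or_graph _ (f_geodesic H (proj1 HH))) as [|[Onto Inj]]; [assumption | exfalso].
  destruct (horizontal_great_circle H HH) as (P & W & r & HPW & HE).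
  pose proof HPW as (PP & WW & PW).
  assert (OnH : forall v t, v = circ P W t -> H (unit_of v, r)).
  { intros v t ->. apply HE. split; [reflexivity|]. exists t. simpl. apply vec_of_unit_of, dot_circ_self, HPW. }
  assert (Sep : forall z1 z2, snd z1 = r -> snd z2 = r -> z1 <> z2 -> snd (f z1) <> snd (f z2)).
  { apply (slice_heights_distinct r (unit_of P) (unit_of W)).
    - intro E. apply (f_equal vec_of) in E. rewrite !vec_of_unit_of in E by assumption.
      rewrite E in PW. lra.
    - intro E. assert (E' : f (unit_of P, r) = f (unit_of W, r)).
      { apply Inj; [apply image_of, (OnH _ 0); symmetry; apply circ_0 |
                    apply image_of, (OnH _ (PI / 2)); symmetry; apply circ_PI2 | congruence]. }
      apply f_inj in E'. injection E' as E'. apply (f_equal vec_of) in E'.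
      rewrite !vec_of_unit_of in E' by assumption. rewrite E' in PW. lra. }
  set (y := (unit_of (cross P W), r)).
  destruct (Onto (snd (f y))) as [w [Iw Ew]].
  apply image_iff, HE in Iw. destruct Iw as [Hr [t Et]].
  apply (Sep (g w) y Hr eq_refl); [|rewrite f_g; exact Ew].
  intro E. rewrite E in Et. unfold y in Et. simpl in Et.
  rewrite vec_of_unit_of in Et by apply orthonormal_cross, HPW.
  exact (circ_neq_cross P W t HPW (eq_sym Et)).
Qed.

Lemma image_same_height z1 z2 : snd z1 = snd z2 -> snd (f z1) = snd (f z2).
Proof.
  destruct z1 as [q1 h], z2 as [q2 h2]. simpl. intros <-.
  destruct (great_circle_through q1 q2 h) as [W [HW [C1 C2]]].
  destruct (horizontal_image _ (great_circle_horizontal _ _ h HW)) as [_ [r Hr]].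
  rewrite (Hr _ (image_of f _ _ C1)), (Hr _ (image_of f _ _ C2)). reflexivity.
Qed.

Lemma nonhorizontal_image G : geodesic G -> ~ horizontal G -> ~ horizontal (image f G).
Proof.
  intros HG HnH [_ [s Hs]].
  destruct (geodesic_horizontal_or_graph G HG) as [|[Onto _]]; [contradiction|].
  destruct (Onto 0) as [x0 _].
  destruct (Onto (snd (g (fst (f x0), s + 1)))) as [x [Gx Ex]].
  apply image_same_height in Ex. rewrite f_g, (Hs _ (image_of f G x Gx)) in Ex. simpl in Ex. lra.
Qed.

Lemma slice_image_injective m q1 q2 : q1 <> q2 -> fst (f (q1, m)) <> fst (f (q2, m)).
Proof.
  intros Hq E. apply Hq.
  assert (E' : f (q1, m) = f (q2, m)).
  { rewrite (surjective_pairing (f (q1, m))), (surjective_pairing (f (q2, m))), E.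
    rewrite (image_same_height (q1, m) (q2, m) eq_refl). reflexivity. }
  apply f_inj in E'. injection E'. auto.
Qed.

(* The great circle through [qi] and [qj] at height [m] is mapped onto the unique great circle
   through the images of [qi] and [qj]; if the image of [qk] lies on it, so does [qk]. *)
Lemma slice_image_coplanar m qi qj qk : qi <> qj -> fst (f (qj, m)) <> antipode (fst (f (qi, m))) ->
  det (vec_of (fst (f (qi, m)))) (vec_of (fst (f (qj, m)))) (vec_of (fst (f (qk, m)))) = 0 ->
  det (vec_of qi) (vec_of qj) (vec_of qk) = 0.
Proof.
  intros Hij Hanti Hdet.
  destruct (great_circle_through qi qj m) as [WD [HWD [Di Dj]]].
  destruct (horizontal_great_circle _ (horizontal_image _ (great_circle_horizontal _ _ m HWD)))
    as (P & W & r & HPW & HE).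
  destruct (proj1 (HE _) (image_of f _ _ Di)) as [Hi [ti Ei]].
  destruct (proj1 (HE _) (image_of f _ _ Dj)) as [_ [tj Ej]].
  rewrite Ei, Ej, det_circ2 in Hdet.
  assert (Hs : sin (tj - ti) <> 0).
  { intro Hs. pose proof (dot_circ P W ti tj HPW) as Dij. rewrite <- Ei, <- Ej, dot_vec_of in Dij.
    pose proof (sin2_cos2 (ti - tj)) as SC. unfold Rsqr in SC.
    replace (sin (ti - tj)) with (- sin (tj - ti)) in SC by (rewrite <- sin_neg; f_equal; ring).
    destruct (s2dot_pm1 (fst (f (qi, m))) (fst (f (qj, m)))) as [E|E]; [nra | | contradiction].
    exact (slice_image_injective m qi qj Hij (eq_sym E)). }
  assert (Dk : det P W (vec_of (fst (f (qk, m)))) = 0)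
    by (destruct (Rmult_integral _ _ Hdet); [contradiction | assumption]).
  destruct (circ_of_det_eq0 P W _ HPW (dot_vec_of_self _) Dk) as [tk Ek].
  assert (Ok : image f (great_circle (vec_of qi) WD m) (f (qk, m))).
  { apply HE. split; [|exists tk; exact Ek]. rewrite <- Hi. apply image_same_height. reflexivity. }
  apply image_iff in Ok. rewrite g_f in Ok. destruct Ok as [_ [tk' Ek']], Dj as [_ [tj' Ej']].
  simpl in Ek', Ej'. rewrite Ek', Ej'.
  replace (vec_of qi) with (circ (vec_of qi) WD 0) at 1 by apply circ_0. apply det_lincomb3.
Qed.

Lemma slice_image_noncoplanar m n q1 q2 q3 : n <> vzero -> det (vec_of q1) (vec_of q2) (vec_of q3) <> 0 ->
  dot n (vec_of (fst (f (q1, m)))) = 0 -> dot n (vec_of (fst (f (q2, m)))) = 0 ->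
  dot n (vec_of (fst (f (q3, m)))) = 0 -> False.
Proof.
  intros Hn Hdet N1 N2 N3.
  assert (H12 : q1 <> q2) by (intros <-; apply Hdet, det_same12).
  assert (H13 : q1 <> q3) by (intros <-; apply Hdet, det_same13).
  assert (H32 : q3 <> q2) by (intros <-; apply Hdet, det_same23).
  destruct (classic (fst (f (q2, m)) = antipode (fst (f (q1, m))))) as [E|E].
  - apply Hdet. rewrite <- (Ropp_involutive (det _ _ _)), <- det_swap23.
    rewrite (slice_image_coplanar m q1 q3 q2); [ring | exact H13 | |].
    + rewrite <- E. exact (slice_image_injective m q3 q2 H32).
    + apply (det_eq0_of_orthogonal n); assumption.
  - apply Hdet, (slice_image_coplanar m q1 q2 q3 H12 E). apply (det_eq0_of_orthogonal n); assumption.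
Qed.

(* Otherwise the helices of [helix_through_fiber] would map a whole small circle of the slice at
   height [m] into the great circle orthogonal to [n]. *)
Lemma fiber_image p r r' :
  fst (f (p, r')) = fst (f (p, r)) \/ fst (f (p, r')) = antipode (fst (f (p, r))).
Proof.
  set (u := fst (f (p, r))). set (v := fst (f (p, r'))).
  destruct (classic (v = u)) as [|Hvu]; [left; assumption|].
  destruct (classic (v = antipode u)) as [|Hvn]; [right; assumption|].
  exfalso. set (n := cross (vec_of u) (vec_of v)).
  destruct (helix_through_fiber p r r') as [m Hm].
  set (q := fun w => unit_of (circ (vec_of p) w (PI / 4))).
  assert (Perp : forall w, orthonormal (vec_of p) w -> dot n (vec_of (fst (f (q w, m)))) = 0).
  { intros w Hw. destruct (Hm w Hw) as (K & HK & K0 & K1 & K2).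
    apply (geodesic_coplanar _ (f (p, r)) (f (p, r')) (f (q w, m)) (f_geodesic K HK));
      apply image_of; assumption. }
  destruct (orthonormal_complete _ (dot_vec_of_self p)) as [E HE].
  pose proof (proj1 (orthonormal_cross _ _ HE)) as HN. pose proof (orthonormal_vopp _ _ HE) as HE'.
  apply (slice_image_noncoplanar m n (q E) (q (cross (vec_of p) E)) (q (vopp E))); auto.
  - apply cross_neq_vzero; assumption.
  - unfold q. rewrite !vec_of_unit_of by (apply dot_circ_self; assumption). apply small_circle_noncoplanar, HE.
Qed.

Lemma vertical_image G : geodesic G -> vertical G -> vertical (image f G).
Proof.
  intros HG [p Hv].
  destruct (geodesic_helix _ (f_geodesic G HG)) as (P & W & a & b & r & (HPW & Hab & _) & HE).
  pose proof HPW as (PP & WW & PW).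
  assert (Pre : forall y, image f G y -> f (p, snd (g y)) = y).
  { intros y Iy. apply image_iff, Hv in Iy. rewrite <- Iy, <- surjective_pairing. apply f_g. }
  assert (Ha0 : a = 0).
  { destruct (Req_dec a 0) as [|Hne]; [assumption | exfalso].
    set (y0 := (unit_of P, r)). set (y1 := (unit_of W, b * (PI / (2 * a)) + r)).
    assert (I0 : image f G y0).
    { apply HE. exists 0. simpl. rewrite vec_of_unit_of, Rmult_0_r, circ_0 by assumption.
      split; [reflexivity | ring]. }
    assert (I1 : image f G y1).
    { apply HE. exists (PI / (2 * a)). simpl. rewrite vec_of_unit_of by assumption.
      replace (a * (PI / (2 * a))) with (PI / 2) by (field; lra). rewrite circ_PI2. split; reflexivity. }
    destruct (fiber_image p (snd (g y0)) (snd (g y1))) as [E|E]; rewrite (Pre y0 I0), (Pre y1 I1) in E;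
      simpl in E; apply (f_equal vec_of) in E; rewrite ?vec_of_antipode, !vec_of_unit_of in E by assumption.
    - rewrite E in PW. lra.
    - rewrite E in PW. unfold dot, vopp in PP, PW; simpl in PW. lra. }
  subst a. assert (Hb : b <> 0) by nra.
  exists (unit_of P). intro y. rewrite HE. split.
  - intros [t [E1 _]]. apply vec_of_inj.
    rewrite E1, vec_of_unit_of, Rmult_0_l, circ_0 by assumption. reflexivity.
  - intro E. exists ((snd y - r) / b). rewrite Rmult_0_l, circ_0, E, vec_of_unit_of by assumption.
    split; [reflexivity | field; exact Hb].
Qed.

(* The vertical line through the preimage of a point of a vertical image is mapped onto
   that vertical image, so the image of [G] determines [G] as a vertical line. *)
Lemma nonvertical_image G : ~ vertical G -> ~ vertical (image f G).
Proof.
  intros HnV [u Hu].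
  set (p := fst (g (u, 0))).
  destruct (vertical_image (fun x => fst x = p) (vertical_line_geodesic p) (ex_intro _ p (fun x => iff_refl _)))
    as [u' Hu'].
  assert (Eu : u = u') by exact (proj1 (Hu' (u, 0)) (proj2 (image_iff _ _) eq_refl)).
  subst u'. apply HnV. exists p. intro x.
  rewrite <- (g_f x), <- image_iff, Hu, <- Hu', image_iff, g_f. reflexivity.
Qed.

End GeodesicPreservingBijection.

Theorem lemma4p10 (f : M -> M) :
  bijection f -> geodesic_preserving f ->
  forall G : M -> Prop, geodesic G ->
    (horizontal G -> horizontal (image f G)) /\
    (vertical G -> vertical (image f G)) /\
    (slant G -> slant (image f G)).
Proof.
  intros [g [g_f f_g]] Hf G HG. split; [|split].
  - apply (horizontal_image f g g_f f_g Hf).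
  - apply (vertical_image f g g_f f_g Hf G HG).
  - intros (_ & HnV & HnH). split; [apply Hf, HG|]. split.
    + apply (nonvertical_image f g g_f f_g Hf G HnV).
    + apply (nonhorizontal_image f g g_f f_g Hf G HG HnH).
Qed.
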